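(* Let $\{G_i\}_{i\in I}$ be a family of Hausdorff topological groups. Assume that each $G_i$ contains a closed, extremely amenable, co-precompact subgroup $H_i$ such that the universal minimal flow of $G_i$ is (isomorphic, as a $G_i$-flow, to) the completion $\widehat{G_i/H_i}$. Then the universal minimal flow of the product group commutes with the product: $$\mathrm{UMF}\Big(\prod_{i} G_i\Big) = \prod_{i} \mathrm{UMF}(G_i).$$
   Context: A flow of a topological group $G$ is a nonempty compact (Hausdorff) space with a jointly continuous $G$-action; it is minimal if every orbit is dense. The universal minimal flow $\mathrm{UMF}(G)$ is the (unique up to isomorphism) minimal flow admitting a $G$-equivariant continuous surjection onto every minimal flow. A topological group is extremely amenable if every continuous action on a nonempty compact space has a fixed point. The right uniform structure on $G$ has basis of entourages $\{(x,y) \mid x\in Uy\}$, $U$ ranging over identity neighbourhoods. A closed subgroup $H\le G$ is co-precompact if the coset space $G/H$, endowed with the quotient of the right uniform structure of $G$, is precompact; $\widehat{G/H}$ denotes its (Hausdorff) completion, a compact $G$-space. *)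

From HB Require Import structures.
From mathcomp Require Import all_boot all_order all_algebra.
From mathcomp Require Import all_classical all_reals all_analysis.

Set Implicit Arguments.
Unset Strict Implicit.
Unset Printing Implicit Defensive.

Import Order.TTheory GRing.Theory Num.Theory.
Local Open Scope classical_set_scope.

Definition is_top_group (G : topologicalType) (mul : G -> G -> G)
    (inv : G -> G) (one : G) : Prop :=
  [/\ (forall x y z, mul x (mul y z) = mul (mul x y) z),
      (forall x, mul one x = x),
      (forall x, mul (inv x) x = one),
      continuous (fun p : G * G => mul p.1 p.2) &
      continuous inv].

Definition is_flow (G : topologicalType) (mul : G -> G -> G) (one : G)
    (X : topologicalType) (act : G -> X -> X) : Prop :=
  [/\ [/\ hausdorff_space X, compact [set: X] & (exists x : X, True)],
      (forall x, act one x = x),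
      (forall g h x, act (mul g h) x = act g (act h x)) &
      continuous (fun p : G * X => act p.1 p.2)].

Definition is_minimal (G : topologicalType) (X : topologicalType)
    (act : G -> X -> X) : Prop :=
  forall x : X, closure (range (fun g => act g x)) = [set: X].

Definition is_UMF (G : topologicalType) (mul : G -> G -> G) (one : G)
    (X : topologicalType) (act : G -> X -> X) : Prop :=
  [/\ is_flow mul one act, is_minimal act &
    forall (Y : topologicalType) (actY : G -> Y -> Y),
      is_flow mul one actY -> is_minimal actY ->
      exists f : X -> Y, [/\ continuous f,
        (forall g x, f (act g x) = actY g (f x)) &
        f @` [set: X] = [set: Y]]].

Definition is_closed_subgroup (G : topologicalType) (mul : G -> G -> G)
    (inv : G -> G) (one : G) (H : set G) : Prop :=
  [/\ closed H, H one, (forall x y, H x -> H y -> H (mul x y)) &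
      (forall x, H x -> H (inv x))].

(** An action of H is encoded by a map defined on all of G of
    which only the restriction to H matters. *)
Definition extremely_amenable_sub (G : topologicalType) (mul : G -> G -> G)
    (one : G) (H : set G) : Prop :=
  forall (X : topologicalType) (act : G -> X -> X),
    hausdorff_space X -> compact [set: X] -> (exists x : X, True) ->
    (forall x, act one x = x) ->
    (forall g h x, H g -> H h -> act (mul g h) x = act g (act h x)) ->
    {within H `*` [set: X], continuous (fun p : G * X => act p.1 p.2)} ->
    exists x : X, forall h, H h -> act h x = x.

Definition in_UyH (G : Type) (mul : G -> G -> G) (H : set G) (U : set G)
    (x y : G) : Prop :=
  exists u h, [/\ U u, H h & x = mul u (mul y h)].

(** Co-precompactness: G/H with the quotient of the right uniformity
    (basic entourages {(xH, yH) | x \in U y H}, U an identity neighbourhood)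
    is precompact: finitely many U-balls cover G/H. *)
Definition co_precompact (G : topologicalType) (mul : G -> G -> G)
    (one : G) (H : set G) : Prop :=
  forall U : set G, nbhs one U ->
    exists F : set G, finite_set F /\
      forall x : G, exists2 y, F y & in_UyH mul H U x y.

(** The G-flow (M, act) is (isomorphic as a G-flow to) the Hausdorff
    completion of G/H: there is a G-equivariant map j : G -> M (factoring
    through G/H) with dense image, such that the induced map G/H -> M
    induces exactly the quotient right uniformity of G/H (i.e. it is a
    uniform embedding up to separation).  Since M is a compact Hausdorff
    (hence complete separated) uniform space, this is the universal
    characterization of the completion of G/H; equivariance on the dense
    image identifies the action with the extension of left translation. *)
Definition is_completion_of_coset_space (G : topologicalType)
    (mul : G -> G -> G) (one : G) (H : set G)
    (M : uniformType) (act : G -> M -> M) : Prop :=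
  exists j : G -> M,
    [/\ (forall g x, j (mul g x) = act g (j x)),
        closure (range j) = [set: M],
        (forall E, entourage E -> exists U : set G, nbhs one U /\
           forall x y, in_UyH mul H U x y -> E (j x, j y)) &
        (forall U : set G, nbhs one U -> exists E, entourage E /\
           forall x y, E (j x, j y) -> in_UyH mul H U x y)].

Definition prod_mul (I : Type) (G : I -> topologicalType)
    (mul : forall i, G i -> G i -> G i) :
    prod_topology G -> prod_topology G -> prod_topology G :=
  fun f g i => mul i (f i) (g i).

Definition prod_one (I : Type) (G : I -> topologicalType)
    (one : forall i, G i) : prod_topology G := fun i => one i.

Definition prod_act (I : Type) (G : I -> topologicalType)
    (M : I -> uniformType) (act : forall i, G i -> M i -> M i) :
    prod_topology G -> prod_topology M -> prod_topology M :=
  fun g x i => act i (g i) (x i).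

From HB Require Import structures.
From mathcomp Require Import all_boot all_order all_algebra.
From mathcomp Require Import all_classical all_reals all_analysis.
Local Open Scope classical_set_scope.

(** Let H be the product of the H i.  The product of the M i is a minimal
    flow of the product group, and the product of the dense embeddings
    G i -> M i is an equivariant dense map j which reflects the uniformity
    of the coset space modulo H.  In a minimal flow Y of the product group,
    the copies of the H i commute and are extremely amenable, so compactness
    of Y yields a point y0 fixed by all of them, hence by their closure H.
    As j reflects the coset uniformity and y0 is H-fixed, the closure of the
    graph of j g |-> g y0 is the graph of a function; Y being compact, that
    function is continuous, and it is equivariant and onto. *)

Lemma dependent_choice (A : Type) (B : A -> Type) (P : forall a, B a -> Prop) :
  (forall a, exists b, P a b) -> exists f : forall a, B a, forall a, P a (f a).
Proof. by move=> h; exists (fun a => projT1 (cid (h a))) => a; case: cid. Qed.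

Lemma cvg_initialP (S : choiceType) (T : topologicalType) (w : S -> T)
    (F : set_system S) (s : S) : Filter F ->
  F --> (s : initial_topology w) <-> w @ F --> w s.
Proof.
move=> FF; split=> [Fs A /(@initial_continuous _ _ w) nA|wF A]; first exact: Fs.
rewrite /= nbhsE => -[_ [[B oB <-] Bs] sBA].
by apply: filterS sBA _; apply: wF; exact: open_nbhs_nbhs.
Qed.

Section ProductTopology.
Context {I : eqType} {K : I -> topologicalType}.
Implicit Types (f g : prod_topology K) (L : seq I) (W : forall i, set (K i)).

Lemma prod_cvgP (F : set_system (prod_topology K)) f : Filter F ->
  F --> f <-> forall i, proj i @ F --> f i.
Proof.
move=> FF; split=> [Ff i|Fi].
  exact: cvg_trans (cvg_app _ Ff) (@proj_continuous _ _ i f).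
apply/(@cvg_sup (prod_topology K) I (fun i => Topological.class
  (initial_topology (@proj I K i))) F f FF) => i.
exact/cvg_initialP.
Qed.

Definition box L W : set (prod_topology K) :=
  [set g | forall i, i \in L -> W i (g i)].

Lemma box_nbhs f L W : (forall i, nbhs (f i) (W i)) -> nbhs f (box L W).
Proof.
move=> nW; elim: L => [|i L IH].
  by apply: filterS filterT => g _ i; rewrite in_nil.
have nWi : nbhs f [set g | W i (g i)] := @proj_continuous _ _ i f _ (nW i).
apply: filterS (filterI nWi IH) => g [Wgi WgL] k; rewrite in_cons.
by case/orP => [/eqP -> //|]; exact: WgL.
Qed.

Lemma nbhs_box f (U : set (prod_topology K)) : nbhs f U ->
  exists L W, (forall i, nbhs (f i) (W i)) /\ box L W `<=` U.
Proof.
pose B : set_system (prod_topology K) := fun U =>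
  exists L W, (forall i, nbhs (f i) (W i)) /\ box L W `<=` U.
have BF : Filter B.
  split.
  - by exists [::], (fun i => setT); split => // i; exact: filterT.
  - move=> P Q [L1 [W1 [nW1 sP]]] [L2 [W2 [nW2 sQ]]].
    exists (L1 ++ L2), (fun i => W1 i `&` W2 i); split=> [i|g gW].
      exact: filterI.
    split; [apply: sP => i iL | apply: sQ => i iL].
      by case: (gW i); rewrite // mem_cat iL.
    by case: (gW i); rewrite // mem_cat iL orbT.
  - by move=> P Q PQ [L [W [nW sP]]]; exists L, W; split=> // g /sP /PQ.
suff Bf : B --> f by exact: Bf.
apply/prod_cvgP => i A nA.
exists [:: i], (dfwith (fun j => [set: K j]) i A); split.
  by move=> j; case: dfwithP => // k _; exact: filterT.
by move=> g /(_ i); rewrite mem_seq1 eqxx dfwithin; exact.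
Qed.

Lemma prod_range_dense {A : I -> Type} (f : forall i, A i -> K i) :
  (forall i, closure (range (f i)) = setT) ->
  closure (range (fun a : forall i, A i =>
    (fun i => f i (a i)) : prod_topology K)) = setT.
Proof.
move=> df; apply/seteqP; split => // m _ U /nbhs_box [L [W [nW sWU]]].
have /dependent_choice [a aW] : forall i, exists a : A i, W i (f i a).
  move=> i; have : closure (range (f i)) (m i) by rewrite df.
  by move=> /(_ _ (nW i)) [_ [[a _ <-] Wa]]; exists a.
by exists (fun i => f i (a i)); split; [exists a | apply: sWU => i _].
Qed.

Definition patch (e : prod_topology K) L f : prod_topology K :=
  fun i => if i \in L then f i else e i.

Lemma closure_patches e f : closure (range (fun L => patch e L f)) f.
Proof.
move=> U /nbhs_box [L [W [nW sWU]]]; exists (patch e L f); split.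
  by exists L.
by apply: sWU => i iL; rewrite /patch iL; exact: nbhs_singleton.
Qed.

End ProductTopology.

Section SetType.
Context {T : topologicalType} (A : set T).

Lemma sval_continuous : continuous (sval : set_type A -> T).
Proof. exact: (@initial_continuous (set_type A) T sval). Qed.

Lemma set_type_hausdorff : hausdorff_space T -> hausdorff_space (set_type A).
Proof.
move=> hT p q pq; apply: val_inj; apply: hT => B C nB nC.
have [z [Bz Cz]] := pq _ _ (sval_continuous _ _ nB) (sval_continuous _ _ nC).
by exists (sval z).
Qed.

Lemma set_type_compact : compact A -> compact [set: set_type A].
Proof.
move=> cA F FF _.
have FA : F (sval @^-1` A).
  by apply: filterS filterT => -[x /= xA] _; exact: set_mem.
have [y [Ay cly]] := cA _ (fmap_proper_filter sval FF) FA.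
exists (exist _ y (mem_set Ay)); split=> // S N FS.
rewrite nbhsE => -[_ [[B oB <-] By] BN].
have FS' : F (sval @^-1` (sval @` S)) by apply: filterS FS => x Sx; exists x.
have [_ [[z Sz <-] Bz]] := cly _ _ FS' (open_nbhs_nbhs (conj oB By)).
by exists z; split=> //; exact: BN.
Qed.

End SetType.

Lemma closed_fixed_set (T : topologicalType) (f : T -> T) :
  hausdorff_space T -> continuous f -> closed [set x | f x = x].
Proof.
move=> hT cf x clx; apply: hT => B C nB nC.
have nfB : nbhs x (f @^-1` B) := cf x B nB.
have [z [fz [fzB zC]]] := clx _ (filterI nfB nC).
by exists z; split; rewrite // -fz.
Qed.

Lemma closed_graph_continuous (X Y : topologicalType) (f : X -> Y) :
  hausdorff_space Y -> compact [set: Y] ->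
  closed [set p : X * Y | f p.1 = p.2] -> continuous f.
Proof.
move=> hY cY clf x.
have graph_cluster : cluster (f @ nbhs x) `<=` [set f x].
  move=> y fxy; apply/esym/(clf (x, y)) => N [[W B] [/= nW nB] WBN].
  have fW : (f @ nbhs x) (f @` W) by apply: filterS nW => z Wz; exists z.
  have [_ [[x' Wx' <-] Bfx']] := fxy _ _ fW nB.
  by exists (x', f x'); split=> //; exact: WBN.
have [y [_ fxy]] := cY _ (fmap_proper_filter f (nbhs_pfilter x)) filterT.
apply: (compact_cluster_set1 hY cY filterT) => //; first exact: filterT.
apply/seteqP; split=> // _ ->; by rewrite -(graph_cluster y fxy).
Qed.

Section TopologicalGroup.
Context {G : topologicalType} {mul : G -> G -> G} {inv : G -> G} {one : G}.
Hypothesis hG : is_top_group mul inv one.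

Lemma grp_mulA x y z : mul x (mul y z) = mul (mul x y) z.
Proof. by case: hG. Qed.

Lemma grp_mul1g x : mul one x = x.
Proof. by case: hG. Qed.

Lemma grp_mulVg x : mul (inv x) x = one.
Proof. by case: hG. Qed.

Lemma grp_mulgV x : mul x (inv x) = one.
Proof.
have xVx : mul (inv x) (mul x (inv x)) = inv x.
  by rewrite grp_mulA grp_mulVg grp_mul1g.
by rewrite -[LHS]grp_mul1g -(grp_mulVg (inv x)) -grp_mulA xVx grp_mulVg.
Qed.

Lemma grp_mulg1 x : mul x one = x.
Proof. by rewrite -(grp_mulVg x) grp_mulA grp_mulgV grp_mul1g. Qed.

End TopologicalGroup.

Section ExtremelyAmenableFixedPoint.
Context {G : topologicalType} {mul : G -> G -> G} {one : G} {H : set G}.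
Hypotheses (EA_H : extremely_amenable_sub mul one H) (H1 : H one)
  (HM : forall x y, H x -> H y -> H (mul x y)).
Context {Y : topologicalType} {act : G -> Y -> Y}.
Hypotheses (hY : hausdorff_space Y) (act1 : forall y, act one y = y)
  (actM : forall g h y, act (mul g h) y = act g (act h y))
  (act_cont : continuous (fun p : G * Y => act p.1 p.2)).
Variable A : set Y.
Hypotheses (cA : compact A) (A0 : A !=set0)
  (HA : forall c y, H c -> A y -> A (act c y)).

(* Outside H the action is irrelevant to [extremely_amenable_sub]: make it
   trivial there. *)
Let actA (c : G) (x : set_type A) : set_type A :=
  match pselect (H c) with
  | left Hc =>
    exist _ (act c (sval x)) (mem_set (HA c (sval x) Hc (set_mem (valP x))))
  | right _ => x
  end.

Let actA_val c x : H c -> sval (actA c x) = act c (sval x).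
Proof. by rewrite /actA; case: pselect. Qed.

Let actA_continuous :
  {within H `*` [set: set_type A], continuous (fun p => actA p.1 p.2)}.
Proof.
apply/subspace_continuousP => p [/= Hp _] N.
rewrite nbhsE => -[_ [[B oB <-] Bp] BN].
pose g (q : G * set_type A) := act q.1 (sval q.2).
have gp : g @ nbhs p --> g p.
  apply: (@continuous2_cvg _ _ _ _ _ _ (fun q : G * set_type A => q.1)
    (fun q : G * set_type A => sval q.2) act p.1 (sval p.2)).
  - exact: (act_cont (p.1, sval p.2)).
  - exact: cvg_fst.
  - by apply: continuous_comp; [exact: cvg_snd | exact: sval_continuous].
have nB : nbhs (g p) B by apply: open_nbhs_nbhs; split; rewrite // /g -actA_val.
have ngB : nbhs p (g @^-1` B) := gp _ nB.
apply: filterS ngB => q gqB [/= Hq _]; apply: BN.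
by change (B (sval (actA q.1 q.2))); rewrite actA_val.
Qed.

Lemma extremely_amenable_fixed_point :
  exists2 y, A y & forall c, H c -> act c y = y.
Proof.
have [x fixx] : exists x : set_type A, forall c, H c -> actA c x = x.
  apply: EA_H actA_continuous.
  - exact: set_type_hausdorff.
  - exact: set_type_compact.
  - by case: A0 => y Ay; exists (exist _ y (mem_set Ay)).
  - by move=> x; apply: val_inj => /=; rewrite actA_val // act1.
  - move=> g h x Hg Hh; apply: val_inj => /=.
    by rewrite !actA_val ?actM //; exact: HM.
exists (sval x); first exact: set_mem (valP x).
by move=> c Hc; rewrite -actA_val // fixx.
Qed.

End ExtremelyAmenableFixedPoint.

Section JointContinuity.
Context {X Y Z : topologicalType} {f : X -> Y -> Z}.
Hypothesis cf : continuous (fun p : X * Y => f p.1 p.2).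

Lemma joint_continuous_r x : continuous (f x).
Proof. exact: (continuous_curry cf).2 x. Qed.

Lemma joint_continuous_l y : continuous (f^~ y).
Proof.
move=> x; apply: (@continuous2_cvg _ _ _ _ _ _ id (fun=> y) f x y).
- exact: (@cf (x, y)).
- exact: cvg_id.
- exact: cvg_cst.
Qed.

End JointContinuity.

Section CommutingFixedPoint.
Context {I : choiceType} {G : I -> topologicalType}
  {mul : forall i, G i -> G i -> G i} {one : forall i, G i}
  {H : forall i, set (G i)}.
Hypotheses (EA_H : forall i, extremely_amenable_sub (mul i) (one i) (H i))
  (H1 : forall i, H i (one i))
  (HM : forall i x y, H i x -> H i y -> H i (mul i x y)).
Context {Y : topologicalType} {act : forall i, G i -> Y -> Y}.
Hypotheses (hY : hausdorff_space Y) (cY : compact [set: Y])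
  (Y0 : [set: Y] !=set0)
  (act1 : forall i y, act i (one i) y = y)
  (actM : forall i g h y, act i (mul i g h) y = act i g (act i h y))
  (act_cont : forall i, continuous (fun p : G i * Y => act i p.1 p.2))
  (act_comm : forall i k c d y, i != k ->
     act i c (act k d y) = act k d (act i c y)).

Let fixed_by i := [set y | forall c, H i c -> act i c y = y].

Let closed_fixed_by i : closed (fixed_by i).
Proof.
have -> : fixed_by i = \bigcap_(c in H i) [set y | act i c y = y].
  by apply/seteqP; split=> y fy c /fy.
apply: closed_bigI => c _; apply: closed_fixed_set hY _.
exact: joint_continuous_r.
Qed.

Let fixed_by_seq (L : seq I) : exists y, forall i, i \in L -> fixed_by i y.
Proof.
elim: L => [|k L [y fy]]; first by case: Y0 => y _; exists y.
have [kL|kNL] := boolP (k \in L).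
  by exists y => i; rewrite in_cons => /orP [/eqP -> |]; exact: fy.
pose A := \bigcap_(i in [set i | i \in L]) fixed_by i.
have cA : compact A.
  apply: subclosed_compact cY _ => //; apply: closed_bigI => i _.
  exact: closed_fixed_by.
have HA c z : H k c -> A z -> A (act k c z).
  move=> Hc Az i iL d Hd; have ki : k != i by apply: contraNneq kNL => ->.
  by rewrite act_comm ?(Az i iL d Hd) // eq_sym.
have [z Az fz] := extremely_amenable_fixed_point (EA_H k) (H1 k) (@HM k)
  hY (act1 k) (@actM k) (act_cont k) A cA (ex_intro _ y fy) HA.
by exists z => i; rewrite in_cons => /orP [/eqP -> |]; [exact: fz | exact: Az].
Qed.

Lemma commuting_extremely_amenable_fixed_point :
  exists y, forall i c, H i c -> act i c y = y.
Proof.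
have finI_fixed : finI [set: I] fixed_by.
  move=> D _; have [y fy] := fixed_by_seq (finmap.enum_fset D).
  by exists y => i; exact: fy.
have FF := finI_filter finI_fixed.
have [y [_ cly]] := cY _ FF filterT.
exists y => i; apply: closed_fixed_by => B; apply: cly.
by exists (fixed_by i) => //; exact: finI_from1.
Qed.

End CommutingFixedPoint.

Definition prod_embed {I : eqType} {G : I -> topologicalType}
    (one : forall i, G i) (i : I) (c : G i) : prod_topology G :=
  dfwith (prod_one one) i c.

Section ProductGroup.
Context {I : eqType} {G : I -> topologicalType}
  {mul : forall i, G i -> G i -> G i} {inv : forall i, G i -> G i}
  {one : forall i, G i}.
Hypothesis hG : forall i, is_top_group (mul i) (inv i) (one i).

Lemma prod_embed_one i : prod_embed one i (one i) = prod_one one.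
Proof.
apply: functional_extensionality_dep => k; rewrite /prod_embed.
by have [<-|ik] := eqVneq i k; rewrite ?dfwithin ?dfwithout.
Qed.

Lemma prod_embed_mul i c d :
  prod_embed one i (mul i c d) =
  prod_mul mul (prod_embed one i c) (prod_embed one i d).
Proof.
apply: functional_extensionality_dep => k; rewrite /prod_mul /prod_embed.
have [<-|ik] := eqVneq i k; first by rewrite !dfwithin.
by rewrite !dfwithout // (grp_mul1g (hG k)).
Qed.

Lemma prod_embed_comm i k c d : i != k ->
  prod_mul mul (prod_embed one i c) (prod_embed one k d) =
  prod_mul mul (prod_embed one k d) (prod_embed one i c).
Proof.
move=> ik; have ki : k != i by rewrite eq_sym.
apply: functional_extensionality_dep => l; rewrite /prod_mul /prod_embed.
have [<-|il] := eqVneq i l.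
  rewrite dfwithin dfwithout // /prod_one.
  by rewrite (grp_mul1g (hG i)) (grp_mulg1 (hG i)).
have [<-|kl] := eqVneq k l.
  rewrite dfwithin dfwithout // /prod_one.
  by rewrite (grp_mul1g (hG k)) (grp_mulg1 (hG k)).
by rewrite !dfwithout.
Qed.

Lemma patch_cons k L h :
  patch (prod_one one) (k :: L) h =
  prod_mul mul (prod_embed one k (if k \in L then one k else h k))
    (patch (prod_one one) L h).
Proof.
apply: functional_extensionality_dep => l; rewrite /prod_mul /patch /prod_embed.
have [<-|kl] := eqVneq k l.
  rewrite dfwithin in_cons eqxx /=.
  by case: (k \in L); rewrite ?(grp_mul1g (hG k)) ?(grp_mulg1 (hG k)).
by rewrite dfwithout // in_cons eq_sym (negbTE kl) (grp_mul1g (hG l)).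
Qed.

End ProductGroup.

Section ProductFixedPoint.
Context {I : choiceType} {G : I -> topologicalType}
  {mul : forall i, G i -> G i -> G i} {inv : forall i, G i -> G i}
  {one : forall i, G i} {H : forall i, set (G i)}.
Hypotheses (hG : forall i, is_top_group (mul i) (inv i) (one i))
  (hH : forall i, is_closed_subgroup (mul i) (inv i) (one i) (H i))
  (EA_H : forall i, extremely_amenable_sub (mul i) (one i) (H i)).
Context {Y : topologicalType} {act : prod_topology G -> Y -> Y}.
Hypothesis flowY : is_flow (prod_mul mul) (prod_one one) act.

Let H1 i : H i (one i). Proof. by case: (hH i). Qed.

Let HM i x y : H i x -> H i y -> H i (mul i x y).
Proof. by case: (hH i) => _ _ HM _; exact: HM. Qed.

Let fixed_by_factors :
  exists y, forall i c, H i c -> act (prod_embed one i c) y = y.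
Proof.
have [[hY cY [y0 _]] act1 actM act_cont] := flowY.
apply: (commuting_extremely_amenable_fixed_point EA_H H1 HM hY cY)
  => [|i y|i g h y|i|i k c d y ik].
- by exists y0.
- by rewrite prod_embed_one.
- by rewrite (prod_embed_mul hG) actM.
- move=> p; apply: (@continuous2_cvg _ _ _ _ _ _
    (fun q : G i * Y => prod_embed one i q.1) snd act).
  + exact: (act_cont (prod_embed one i p.1, p.2)).
  + by apply: continuous_comp; [exact: cvg_fst | exact: dfwith_continuous].
  + exact: cvg_snd.
- by rewrite -!actM (prod_embed_comm hG).
Qed.

Lemma prod_subgroup_fixed_point :
  exists y, forall h, (forall i, H i (h i)) -> act h y = y.
Proof.
have [[hY _ _] act1 actM act_cont] := flowY.
have [y fixy] := fixed_by_factors.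
exists y => h Hh.
have patch_fixed L : act (patch (prod_one one) L h) y = y.
  elim: L => [|k L IH]; first exact: act1.
  by rewrite (patch_cons hG) actM IH fixy //; case: (k \in L).
have closed_stab : closed (act^~ y @^-1` [set y]).
  move/continuous_closedP: (joint_continuous_l act_cont y); apply.
  exact: (@accessible_closed_set1 _ (hausdorff_accessible hY) y).
apply: closed_stab; apply: closureS (closure_patches (prod_one one) h).
by move=> _ [L _ <-]; exact: patch_fixed.
Qed.

End ProductFixedPoint.

Section ProductFlow.
Context {I : eqType} {G : I -> topologicalType}
  {mul : forall i, G i -> G i -> G i} {one : forall i, G i}
  {M : I -> uniformType} {act : forall i, G i -> M i -> M i}.
Hypothesis flowM : forall i, is_flow (mul i) (one i) (act i).

Lemma prod_act_continuous :
  continuous (fun p : prod_topology G * prod_topology M =>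
    prod_act act p.1 p.2).
Proof.
move=> p; apply/prod_cvgP => i; have [_ _ _ act_cont] := flowM i.
suff : (fun q : prod_topology G * prod_topology M => act i (q.1 i) (q.2 i))
  @ nbhs p --> act i (p.1 i) (p.2 i) by [].
apply: (@continuous2_cvg _ _ _ _ _ _
  (fun q : prod_topology G * prod_topology M => q.1 i)
  (fun q : prod_topology G * prod_topology M => q.2 i) (act i)).
- exact: (act_cont (p.1 i, p.2 i)).
- exact: (continuous_comp cvg_fst (@proj_continuous _ _ i p.1)).
- exact: (continuous_comp cvg_snd (@proj_continuous _ _ i p.2)).
Qed.

Lemma prod_flow : is_flow (prod_mul mul) (prod_one one) (prod_act act).
Proof.
split; [split| | |].
- by apply: (@hausdorff_product I M) => i; case: (flowM i) => -[].
- have cM i : compact [set: M i] by case: (flowM i) => -[].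
  by have := @tychonoff I M (fun i => setT) cM; congr compact; apply/seteqP.
- have /dependent_choice [m _] : forall i, exists m : M i, True.
    by move=> i; case: (flowM i) => -[].
  by exists m.
- move=> m; apply: functional_extensionality_dep => i.
  by case: (flowM i) => _ + _ _; apply.
- move=> g h m; apply: functional_extensionality_dep => i.
  by case: (flowM i) => _ _ + _; apply.
- exact: prod_act_continuous.
Qed.

Lemma prod_minimal :
  (forall i, is_minimal (act i)) -> is_minimal (prod_act act).
Proof.
move=> minM m; exact: (prod_range_dense _ (fun i => minM i (m i))).
Qed.

End ProductFlow.

Definition reflects_coset_uniformity {G X : topologicalType} (mul : G -> G -> G)
    (one : G) (H : set G) (j : G -> X) : Prop :=
  forall (m : X) (U : set G), nbhs one U ->
    exists2 W, nbhs m W & forall x y, W (j x) -> W (j y) -> in_UyH mul H U x y.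

Lemma entourage_reflects_coset_uniformity {G : topologicalType}
    {M : uniformType} (mul : G -> G -> G) (one : G) (H : set G) (j : G -> M) :
  (forall U, nbhs one U -> exists E, entourage E /\
     forall x y, E (j x, j y) -> in_UyH mul H U x y) ->
  reflects_coset_uniformity mul one H j.
Proof.
move=> jE m U nU; have [E [eE EU]] := jE U nU.
exists (xsection (split_ent E `&` (split_ent E)^-1)%relation m).
  exact: nbhs_entourage (entourage_invI (entourage_split_ent eE)).
move=> x y /xsectionP [_ mx] /xsectionP [my _]; apply: EU.
exact: (entourage_split m).
Qed.

Lemma prod_reflects_coset_uniformity {I : eqType} {G X : I -> topologicalType}
    {mul : forall i, G i -> G i -> G i} {inv : forall i, G i -> G i}
    {one : forall i, G i} {H : forall i, set (G i)} (j : forall i, G i -> X i) :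
  (forall i, is_top_group (mul i) (inv i) (one i)) ->
  (forall i, H i (one i)) ->
  (forall i, reflects_coset_uniformity (mul i) (one i) (H i) (j i)) ->
  reflects_coset_uniformity (prod_mul mul) (prod_one one)
    [set h | forall i, H i (h i)]
    (fun g : prod_topology G => (fun i => j i (g i)) : prod_topology X).
Proof.
move=> hG H1 jU m U /nbhs_box [L [V [nV VU]]].
have /dependent_choice [W WV] : forall i, exists W : set (X i), nbhs (m i) W /\
    forall x y, W (j i x) -> W (j i y) -> in_UyH (mul i) (H i) (V i) x y.
  by move=> i; have [W nW WV] := jU i (m i) (V i) (nV i); exists W.
exists (box L W); first by apply: box_nbhs => i; case: (WV i).
move=> x y Wx Wy.
have /dependent_choice [uh uhP] : forall i, exists uh : G i * G i,
    [/\ i \in L -> V i uh.1, H i uh.2 & x i = mul i uh.1 (mul i (y i) uh.2)].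
  move=> i; case: (boolP (i \in L)) => iL.
    have [u [h [Vu Hh ->]]] := (WV i).2 _ _ (Wx i iL) (Wy i iL).
    by exists (u, h).
  exists (mul i (x i) (inv i (y i)), one i); split=> //=.
  rewrite (grp_mulg1 (hG i)) -(grp_mulA (hG i)).
  by rewrite (grp_mulVg (hG i)) (grp_mulg1 (hG i)).
exists (fun i => (uh i).1), (fun i => (uh i).2); split.
- by apply: VU => i iL; case: (uhP i) => /(_ iL).
- by move=> i; case: (uhP i).
- by apply: functional_extensionality_dep => i; case: (uhP i).
Qed.

Lemma prod_coset_space_embedding {I : eqType} {G : I -> topologicalType}
    {mul : forall i, G i -> G i -> G i} {inv : forall i, G i -> G i}
    {one : forall i, G i} {H : forall i, set (G i)}
    {M : I -> uniformType} {act : forall i, G i -> M i -> M i} :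
  (forall i, is_top_group (mul i) (inv i) (one i)) ->
  (forall i, H i (one i)) ->
  (forall i, is_completion_of_coset_space (mul i) (one i) (H i) (act i)) ->
  exists j : prod_topology G -> prod_topology M,
    [/\ forall g x, j (prod_mul mul g x) = prod_act act g (j x),
        closure (range j) = setT &
        reflects_coset_uniformity (prod_mul mul) (prod_one one)
          [set h | forall i, H i (h i)] j].
Proof.
move=> hG H1 completion_M.
have /dependent_choice [j jP] : forall i, exists j : G i -> M i,
    [/\ forall g x, j (mul i g x) = act i g (j x), closure (range j) = setT
      & reflects_coset_uniformity (mul i) (one i) (H i) j].
  move=> i; have [j [j_equiv j_dense _ j_reflects]] := completion_M i.
  by exists j; split=> //; exact: entourage_reflects_coset_uniformity.
exists (fun g i => j i (g i)); split.
- move=> g x; apply: functional_extensionality_dep => i.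
  by rewrite /prod_mul; case: (jP i) => ->.
- by apply: prod_range_dense => i; case: (jP i).
- by apply: prod_reflects_coset_uniformity => // i; case: (jP i).
Qed.

Section FactorThroughCosetSpace.
Context {G : topologicalType} {mul : G -> G -> G} {one : G} {H : set G}.
Context {X : topologicalType} {actX : G -> X -> X} {j : G -> X}.
Hypotheses (hX : hausdorff_space X) (cX : compact [set: X])
  (actX_cont : forall g, continuous (actX g))
  (j_equiv : forall g x, j (mul g x) = actX g (j x))
  (j_dense : closure (range j) = setT)
  (j_reflects : reflects_coset_uniformity mul one H j).
Context {Y : topologicalType} {actY : G -> Y -> Y}.
Hypotheses (flowY : is_flow mul one actY) (minY : is_minimal actY).
Variable y0 : Y.
Hypothesis y0_fixed : forall h, H h -> actY h y0 = y0.

Let hY : hausdorff_space Y. Proof. by case: flowY => -[]. Qed.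
Let cY : compact [set: Y]. Proof. by case: flowY => -[]. Qed.
Let actY1 y : actY one y = y. Proof. by case: flowY. Qed.
Let actYM g h y : actY (mul g h) y = actY g (actY h y).
Proof. by case: flowY. Qed.
Let actY_cont : continuous (fun p : G * Y => actY p.1 p.2).
Proof. by case: flowY. Qed.

Let graph := closure (range (fun g => (j g, actY g y0))).

Let graph_functional {m y1 y2} : graph (m, y1) -> graph (m, y2) -> y1 = y2.
Proof.
(* With U B3 included in B2: if j g1 and j g2 lie in W, then g1 is in U g2 H,
   so g1 y0 lies in U (g2 y0) since H fixes y0. *)
move=> gy1 gy2; apply: hY => B1 B2 nB1 nB2.
have [[U B3] [/= nU nB3] UB3] :
    nbhs (one, y2) ((fun p => actY p.1 p.2) @^-1` B2).
  by apply: actY_cont; rewrite /= actY1.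
have [W nW WU] := j_reflects m U nU.
have nWB1 : nbhs (m, y1) (W `*` B1) by exists (W, B1).
have nWB3 : nbhs (m, y2) (W `*` B3) by exists (W, B3).
have [_ [[g1 _ <-] [/= Wg1 B1g1]]] := gy1 _ nWB1.
have [_ [[g2 _ <-] [/= Wg2 B3g2]]] := gy2 _ nWB3.
have [u [h [Uu Hh g1E]]] := WU _ _ Wg1 Wg2.
exists (actY g1 y0); split=> //.
have -> : actY g1 y0 = actY u (actY g2 y0) by rewrite g1E !actYM y0_fixed.
exact: (UB3 (u, actY g2 y0)).
Qed.

Let graph_total m : exists y, graph (m, y).
Proof.
have c_graph : compact graph.
  have cXY : compact [set: X * Y] by rewrite -setXTT; exact: compact_setX.
  by apply: (subclosed_compact _ cXY) => //; exact: closed_closure.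
have fst_cont : continuous (@fst X Y) by move=> p; exact: cvg_fst.
have c_dom := continuous_compact (continuous_subspaceT fst_cont) c_graph.
have [[m' y] gy /= <-] : (fst @` graph) m.
  apply: (compact_closed hX c_dom).
  have : closure (range j) m by rewrite j_dense.
  apply: closureS => _ [g _ <-].
  by exists (j g, actY g y0) => //; apply: subset_closure; exists g.
by exists y.
Qed.

Let f m := xget y0 [set y | graph (m, y)].

Let graph_f m : graph (m, f m).
Proof. exact: xgetPex (graph_total m). Qed.

Let f_j g : f (j g) = actY g y0.
Proof.
by apply: graph_functional (graph_f _) _; apply: subset_closure; exists g.
Qed.

Let f_continuous : continuous f.
Proof.
apply: closed_graph_continuous hY cY _.
have -> : [set p : X * Y | f p.1 = p.2] = graph.
  apply/seteqP; split=> [[m y] /= <-|[m y] gy]; first exact: graph_f.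
  exact: graph_functional (graph_f m) gy.
exact: closed_closure.
Qed.

Let graph_act g {m y} : graph (m, y) -> graph (actX g m, actY g y).
Proof.
move=> gmy; pose act2 (p : X * Y) := (actX g p.1, actY g p.2).
have act2_cont : continuous act2.
  move=> p; apply: cvg_pair.
    exact: (continuous_comp cvg_fst (actX_cont g p.1)).
  exact: (continuous_comp cvg_snd (joint_continuous_r actY_cont g p.2)).
have cl_graph2 : closed (act2 @^-1` graph).
  by move/continuous_closedP: act2_cont; apply; exact: closed_closure.
have orbit_graph2 : range (fun g => (j g, actY g y0)) `<=` act2 @^-1` graph.
  move=> _ [x _ <-]; apply: subset_closure.
  by exists (mul g x) => //; rewrite /act2 /= j_equiv actYM.
exact: cl_graph2 (m, y) (closureS orbit_graph2 gmy).
Qed.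

Lemma factor_through_coset_space : exists f : X -> Y, [/\ continuous f,
  forall g m, f (actX g m) = actY g (f m) & f @` setT = setT].
Proof.
exists f; split=> [|g m|]; first exact: f_continuous.
  exact: graph_functional (graph_f _) (graph_act g (graph_f m)).
have c_img := continuous_compact (continuous_subspaceT f_continuous) cX.
apply/seteqP; split=> // y _; apply: (compact_closed hY c_img).
have : closure (range (actY^~ y0)) y by rewrite minY.
by apply: closureS => _ [g _ <-]; exists (j g); rewrite ?f_j.
Qed.

End FactorThroughCosetSpace.

Theorem proposition3 (I : Type) (G : I -> topologicalType)
    (mul : forall i, G i -> G i -> G i) (inv : forall i, G i -> G i)
    (one : forall i, G i) (H : forall i, set (G i))
    (M : I -> uniformType) (act : forall i, G i -> M i -> M i) :
  (forall i, is_top_group (mul i) (inv i) (one i)) ->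
  (forall i, hausdorff_space (G i)) ->
  (forall i, is_closed_subgroup (mul i) (inv i) (one i) (H i)) ->
  (forall i, extremely_amenable_sub (mul i) (one i) (H i)) ->
  (forall i, co_precompact (mul i) (one i) (H i)) ->
  (forall i, is_UMF (mul i) (one i) (act i)) ->
  (forall i, is_completion_of_coset_space (mul i) (one i) (H i) (act i)) ->
  is_UMF (prod_mul mul) (prod_one one) (prod_act act).
Proof.
(* Likewise only the flow and minimality parts of
   is_UMF for M i are used. *)
move=> hG _ hH EA_H _ UMF_M completion_M.
pose J : choiceType := {classic I}.
have flowM (i : J) : is_flow (mul i) (one i) (act i) by case: (UMF_M i).
have [[hPM cPM _] _ _ prod_act_cont] := prod_flow flowM.
split=> [||Y actY flowY minY]; first exact: (prod_flow flowM).
  by apply: (@prod_minimal J) => i; case: (UMF_M i).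
have [y0 y0_fixed] :=
  @prod_subgroup_fixed_point J _ _ _ _ _ hG hH EA_H _ _ flowY.
have H1 i : H i (one i) by case: (hH i).
have [j [j_equiv j_dense j_reflects]] :=
  @prod_coset_space_embedding J _ _ _ _ _ _ _ hG H1 completion_M.
exact: (factor_through_coset_space hPM cPM (joint_continuous_r prod_act_cont)
  j_equiv j_dense j_reflects flowY minY y0 y0_fixed).
Qed.
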